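(* Consider the discrete-time linear time-invariant system $$x_{k+1}=Ax_k+Bu_k,\qquad y_k=Cx_k+Du_k,$$ with $x_k\in\mathbb{R}^n$, $u_k\in\mathbb{R}^m$, $y_k\in\mathbb{R}^p$, unknown matrices $(A,B,C,D)$, $(A,B)$ controllable and $(A,C)$ observable. Let $l\geq \underline{l}$ be an integer, where $\underline{l}$ is the lag of the system, and let $\xi_t=\begin{bmatrix}u_{[t-l,t-1]}\\ y_{[t-l,t-1]}\end{bmatrix}\in\mathbb{R}^{n_\xi}$, $n_\xi=(m+p)l$, be the extended state, which evolves according to the extended dynamics $\xi_{k+1}=\tilde A\xi_k+\tilde Bu_k$, $y_k=\tilde C\xi_k+\tilde Du_k$ described in the context. Let $\{u_k^d,y_k^d\}_{k=0}^{N-1}$ be an input-output trajectory of the system, let $\mathbb{U}\subseteq\mathbb{R}^m$, $\mathbb{Y}\subseteq\mathbb{R}^p$ be constraint sets, let $(u^s,y^s)\in\mathrm{int}(\mathbb{U}\times\mathbb{Y})$ be an equilibrium of the system with corresponding extended steady state $\xi^s=\begin{bmatrix}u^s\\ \vdots\\ u^s\\ y^s\\ \vdots\\ y^s\end{bmatrix}$, let $Q\succ0$, $R\succ0$, and let $L\in\mathbb{I}_{\geq1}$. Suppose that: (A1) there exist $P=P^\top\succ0$, $K\in\mathbb{R}^{m\times n_\xi}$ and a set $\Xi_f\subseteq\mathbb{U}^l\times\mathbb{Y}^l$ with $\xi^s\in\mathrm{int}(\Xi_f)$ such that for all $\xi\in\Xi_f$, with $u=u^s+K(\xi-\xi^s)$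 and $y=\tilde C\xi+\tilde Du$, we have (i) $\tilde A\xi+\tilde Bu\in\Xi_f$; (ii) $u\in\mathbb{U}$ and $y\in\mathbb{Y}$; (iii) $\lVert(\tilde A+\tilde BK)(\xi-\xi^s)\rVert_P^2\leq\lVert\xi-\xi^s\rVert_P^2-\lVert\xi-\xi^s\rVert_{K^\top RK}^2-\lVert y-y^s\rVert_Q^2$; (A2) there exists $c_u>0$ such that $J_L^*(\xi)\leq c_u\lVert\xi-\xi^s\rVert_2^2$ for all $\xi$ for which the optimal control problem below is feasible; (A3) the input $u^d$ is persistently exciting of order $L+l+n$. At each time $t\in\mathbb{I}_{\geq0}$, given the past $l$ closed-loop measurements $u_{[t-l,t-1]}$, $y_{[t-l,t-1]}$ (i.e., $\xi_t$), solve $$\min_{\alpha(t),\bar u(t),\bar y(t)}\ \sum_{k=0}^{L-1}\Big(\lVert\bar u_k(t)-u^s\rVert_R^2+\lVert\bar y_k(t)-y^s\rVert_Q^2\Big)+\lVert\bar\xi_L(t)-\xi^s\rVert_P^2$$ subject to $\begin{bmatrix}\bar u_{[-l,L-1]}(t)\\ \bar y_{[-l,L-1]}(t)\end{bmatrix}=\begin{bmatrix}H_{L+l}(u^d)\\ H_{L+l}(y^d)\end{bmatrix}\alpha(t)$, $\ \begin{bmatrix}\bar u_{[-l,-1]}(t)\\ \bar y_{[-l,-1]}(t)\end{bmatrix}=\begin{bmatrix}u_{[t-l,t-1]}\\ y_{[t-l,t-1]}\end{bmatrix}$, $\ \bar\xi_L(t)=\begin{bmatrix}\bar u_{[L-l,L-1]}(t)\\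 \bar y_{[L-l,L-1]}(t)\end{bmatrix}\in\Xi_f$, and $\bar u_k(t)\in\mathbb{U}$, $\bar y_k(t)\in\mathbb{Y}$ for $k\in\mathbb{I}_{[0,L-1]}$, and apply $u_t=\bar u_0^*(t)$, where $\bar u^*(t)$ is an optimal solution; $J_L^*(\xi_t)$ denotes the optimal value. If this problem is feasible at the initial time $t=0$, then (i) it is feasible at every $t\in\mathbb{I}_{\geq0}$; (ii) the closed-loop trajectory satisfies $u_t\in\mathbb{U}$ and $y_t\in\mathbb{Y}$ for all $t\in\mathbb{I}_{\geq0}$; (iii) the equilibrium $\xi^s$ is exponentially stable for the resulting closed loop (in the extended state $\xi_t$).
   Context: Notation: $\mathbb{I}_{[a,b]}$ is the set of integers in $[a,b]$, $\mathbb{I}_{\geq0}$ the nonnegative integers; $\lVert x\rVert_P^2=x^\top Px$. For a sequence $\{x_k\}_{k=0}^{N-1}$, $x_{[a,b]}=\begin{bmatrix}x_a^\top&\dots&x_b^\top\end{bmatrix}^\top$ and $x=x_{[0,N-1]}$. The Hankel matrix of depth $L$ is $H_L(x)=\begin{bmatrix}x_0&x_1&\dots&x_{N-L}\\ x_1&x_2&\dots&x_{N-L+1}\\ \vdots&&&\vdots\\ x_{L-1}&x_L&\dots&x_{N-1}\end{bmatrix}$. A sequence $\{u_k,y_k\}$ is a trajectory of the system if there is an initial state $x_0$ such that the system equations hold. $\{u_k\}_{k=0}^{N-1}$, $u_k\in\mathbb{R}^m$, is persistently exciting of order $L$ if $\mathrm{rank}(H_L(u))=mL$. The lag $\underline{l}$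 is the smallest $l\in\mathbb{I}_{[1,n]}$ such that $\Phi_l=\begin{bmatrix}C^\top&(CA)^\top&\dots&(CA^{l-1})^\top\end{bmatrix}^\top$ has rank $n$. $(u^s,y^s)$ is an equilibrium if the constant sequence $(\bar u_k,\bar y_k)=(u^s,y^s)$, $k\in\mathbb{I}_{[0,\underline{l}]}$, is a trajectory of the system. Extended dynamics: for $l\geq\underline{l}$ there exist matrices $G_1,\dots,G_l\in\mathbb{R}^{p\times m}$, $F_1,\dots,F_l\in\mathbb{R}^{p\times p}$ such that every trajectory satisfies $y_k=\sum_{i=1}^l G_iu_{k-i}+\sum_{i=1}^l F_iy_{k-i}+Du_k$; correspondingly $\xi_{k+1}=\tilde A\xi_k+\tilde Bu_k$, $y_k=\tilde C\xi_k+\tilde Du_k$, where $\tilde A$ shifts the input blocks and output blocks of $\xi_k$ up by one (dropping $u_{k-l}$, $y_{k-l}$), sets the new last input block to $0$ and the new last output block to $\tilde C\xi_k$, with $\tilde C=\begin{bmatrix}G_l&\dots&G_1&F_l&\dots&F_1\end{bmatrix}$, $\tilde D=D$, and $\tilde B$ has $I$ in the last input block, $D$ in the last output block and zeros elsewhere. The closed-loop extended state is $\xi_t=\begin{bmatrix}u_{[t-l,t-1]}^\top& y_{[t-l,t-1]}^\top\end{bmatrix}^\top$. *)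

From HB Require Import structures.
From mathcomp Require Import all_boot all_order all_algebra.
From mathcomp Require Import boolp classical_sets reals.
Set Implicit Arguments. Unset Strict Implicit. Unset Printing Implicit Defensive.
Import Order.TTheory GRing.Theory Num.Theory.
Local Open Scope ring_scope.

Section Defs.
Variable R : realType.

Definition blkrow (k d1 d2 : nat) (M : 'I_k -> 'M[R]_(d1, d2)) : 'M[R]_(d1, k * d2) :=
  \matrix_(r < d1) mxvec (\matrix_(i < k, j < d2) M i r j).
Definition blkcol (k d1 d2 : nat) (M : 'I_k -> 'M[R]_(d1, d2)) : 'M[R]_(k * d1, d2) :=
  (blkrow (fun i => (M i)^T))^T.
Definition blkmx (k d1 d2 : nat) (M : 'I_k -> 'I_k -> 'M[R]_(d1, d2)) : 'M[R]_(k * d1, k * d2) :=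
  blkcol (fun i => blkrow (fun j => M i j)).
Definition blk (k d : nat) (i : 'I_k) (v : 'cV[R]_(k * d)) : 'cV[R]_d :=
  \col_(j < d) v (mxvec_index i j) ord0.

Definition seg (d : nat) (x : nat -> 'cV[R]_d) (a k : nat) : 'cV[R]_(k * d) :=
  blkcol (fun i : 'I_k => x (a + i)%N).

Definition hankel (d : nat) (L N : nat) (x : nat -> 'cV[R]_d) : 'M[R]_(L * d, (N - L).+1) :=
  \matrix_(r < L * d, c < (N - L).+1) (seg x c L) r ord0.

(* persistency of excitation of order L (the Hankel matrix H_L(u) requires L <= N) *)
Definition pers_exc (m : nat) (N L : nat) (u : nat -> 'cV[R]_m) : Prop :=
  (L <= N)%N /\ \rank (hankel L N u) = (m * L)%N.

Definition controllable (n m : nat) (A : 'M[R]_n) (B : 'M[R]_(n, m)) : Prop :=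
  \rank (blkrow (fun i : 'I_n => A ^+ i *m B)) = n.

Definition obsv_mx (n p : nat) (A : 'M[R]_n) (C : 'M[R]_(p, n)) (l : nat) : 'M[R]_(l * p, n) :=
  blkcol (fun i : 'I_l => C *m A ^+ i).

Definition observable (n p : nat) (A : 'M[R]_n) (C : 'M[R]_(p, n)) : Prop :=
  \rank (obsv_mx A C n) = n.

Definition is_lag (n p : nat) (A : 'M[R]_n) (C : 'M[R]_(p, n)) (lg : nat) : Prop :=
  [/\ (1 <= lg <= n)%N, \rank (obsv_mx A C lg) = n &
      forall l', (1 <= l')%N -> (l' < lg)%N -> \rank (obsv_mx A C l') <> n].

Definition is_traj (n m p : nat) (A : 'M[R]_n) (B : 'M[R]_(n, m)) (C : 'M[R]_(p, n))
  (D : 'M[R]_(p, m)) (N : nat) (u : nat -> 'cV[R]_m) (y : nat -> 'cV[R]_p) : Prop :=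
  exists x : nat -> 'cV[R]_n,
    (forall k, (k < N)%N -> y k = C *m x k + D *m u k) /\
    (forall k, (k.+1 < N)%N -> x k.+1 = A *m x k + B *m u k).

Definition is_equilibrium (n m p : nat) (A : 'M[R]_n) (B : 'M[R]_(n, m)) (C : 'M[R]_(p, n))
  (D : 'M[R]_(p, m)) (lg : nat) (us : 'cV[R]_m) (ys : 'cV[R]_p) : Prop :=
  is_traj A B C D lg.+1 (fun _ => us) (fun _ => ys).

(* G_1..G_l, F_1..F_l (G i = G_(i+1)) describe the extended dynamics *)
Definition ext_dyn (n m p l : nat) (A : 'M[R]_n) (B : 'M[R]_(n, m)) (C : 'M[R]_(p, n))
  (D : 'M[R]_(p, m)) (G : 'I_l -> 'M[R]_(p, m)) (F : 'I_l -> 'M[R]_(p, p)) : Prop :=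
  forall N u y, is_traj A B C D N u y ->
    forall k, (l <= k)%N -> (k < N)%N ->
      y k = \sum_(i < l) G i *m u (k - i.+1)%N + \sum_(i < l) F i *m y (k - i.+1)%N + D *m u k.

Definition shift_mx (l d : nat) : 'M[R]_(l * d) :=
  blkmx (fun i j : 'I_l => if (j : nat) == i.+1 then (1%:M : 'M[R]_d) else 0).
Definition last_mx (l d : nat) : 'M[R]_(l * d, d) :=
  blkcol (fun i : 'I_l => if (i : nat) == l.-1 then (1%:M : 'M[R]_d) else 0).

Definition Ct_u (p m l : nat) (G : 'I_l -> 'M[R]_(p, m)) : 'M[R]_(p, l * m) :=
  blkrow (fun i : 'I_l => G (rev_ord i)).
Definition Ct_y (p l : nat) (F : 'I_l -> 'M[R]_(p, p)) : 'M[R]_(p, l * p) :=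
  blkrow (fun i : 'I_l => F (rev_ord i)).
Definition Ct (p m l : nat) (G : 'I_l -> 'M[R]_(p, m)) (F : 'I_l -> 'M[R]_(p, p))
  : 'M[R]_(p, l * m + l * p) := row_mx (Ct_u G) (Ct_y F).
Definition At (p m l : nat) (G : 'I_l -> 'M[R]_(p, m)) (F : 'I_l -> 'M[R]_(p, p))
  : 'M[R]_(l * m + l * p) :=
  block_mx (shift_mx l m) 0
           (last_mx l p *m Ct_u G) (shift_mx l p + last_mx l p *m Ct_y F).
Definition Bt (p m l : nat) (D : 'M[R]_(p, m)) : 'M[R]_(l * m + l * p, m) :=
  col_mx (last_mx l m) (last_mx l p *m D).

Definition ext_state (m p l : nat) (u : nat -> 'cV[R]_m) (y : nat -> 'cV[R]_p) (a : nat)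
  : 'cV[R]_(l * m + l * p) := col_mx (seg u a l) (seg y a l).
Definition ext_ss (m p l : nat) (us : 'cV[R]_m) (ys : 'cV[R]_p) : 'cV[R]_(l * m + l * p) :=
  ext_state l (fun _ => us) (fun _ => ys) 0.

Definition qf (d : nat) (P : 'M[R]_d) (x : 'cV[R]_d) : R := (x^T *m P *m x) ord0 ord0.
Definition sqnorm (d : nat) (x : 'cV[R]_d) : R := \sum_(i < d) (x i ord0) ^+ 2.
Definition posdef (d : nat) (P : 'M[R]_d) : Prop :=
  P^T = P /\ forall x : 'cV[R]_d, x != 0 -> 0 < qf P x.

Definition in_interior (d : nat) (S : set 'cV[R]_d) (x : 'cV[R]_d) : Prop :=
  exists2 e : R, 0 < e & forall z : 'cV[R]_d, (forall i, `|z i ord0 - x i ord0| < e) -> S z.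

Definition in_UlYl (m p l : nat) (U : set 'cV[R]_m) (Y : set 'cV[R]_p)
  (xi : 'cV[R]_(l * m + l * p)) : Prop :=
  forall i : 'I_l, U (blk i (usubmx xi)) /\ Y (blk i (dsubmx xi)).

(* Indices are shifted by l: ub k, yb k stand for bar u_(k-l)(t), bar y_(k-l)(t). *)
Section OCP.
Variables (m p l L N : nat) (ud : nat -> 'cV[R]_m) (yd : nat -> 'cV[R]_p)
  (U : set 'cV[R]_m) (Y : set 'cV[R]_p) (us : 'cV[R]_m) (ys : 'cV[R]_p)
  (Qw : 'M[R]_p) (Rw : 'M[R]_m) (P : 'M[R]_(l * m + l * p))
  (Xf : set 'cV[R]_(l * m + l * p)).

Definition ocp_feasible_sol (xi : 'cV[R]_(l * m + l * p))
  (alpha : 'cV[R]_(N - (L + l)).+1) (ub : nat -> 'cV[R]_m) (yb : nat -> 'cV[R]_p) : Prop :=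
  [/\ seg ub 0 (L + l) = hankel (L + l) N ud *m alpha,
      seg yb 0 (L + l) = hankel (L + l) N yd *m alpha,
      ext_state l ub yb 0 = xi,
      Xf (ext_state l ub yb L) &
      forall k, (k < L)%N -> U (ub (l + k)%N) /\ Y (yb (l + k)%N)].

Definition ocp_cost (ub : nat -> 'cV[R]_m) (yb : nat -> 'cV[R]_p) : R :=
  \sum_(k < L) (qf Rw (ub (l + k)%N - us) + qf Qw (yb (l + k)%N - ys))
  + qf P (ext_state l ub yb L - ext_ss l us ys).

Definition ocp_feasible (xi : 'cV[R]_(l * m + l * p)) : Prop :=
  exists alpha ub yb, ocp_feasible_sol xi alpha ub yb.

Definition ocp_optimal_sol (xi : 'cV[R]_(l * m + l * p))
  (alpha : 'cV[R]_(N - (L + l)).+1) (ub : nat -> 'cV[R]_m) (yb : nat -> 'cV[R]_p) : Prop :=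
  ocp_feasible_sol xi alpha ub yb /\
  forall alpha' ub' yb', ocp_feasible_sol xi alpha' ub' yb' -> ocp_cost ub yb <= ocp_cost ub' yb'.

Definition ocp_value (xi : 'cV[R]_(l * m + l * p)) : R :=
  inf [set c | exists alpha ub yb, ocp_feasible_sol xi alpha ub yb /\ c = ocp_cost ub yb].
End OCP.

End Defs.
Arguments ocp_feasible_sol {R m p l} L N.
Arguments ocp_feasible {R m p l} L N.
Arguments ocp_optimal_sol {R m p l} L N.
Arguments ocp_value {R m p l} L N.

From HB Require Import structures.
From mathcomp Require Import all_boot all_order all_algebra.
From mathcomp Require Import boolp classical_sets reals.
From mathcomp Require Import zify ring lra.
Import Order.TTheory GRing.Theory Num.Theory.
Set Implicit Arguments. Unset Strict Implicit. Unset Printing Implicit Defensive.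
Local Open Scope ring_scope.

(* The optimal value J_L^* of the data-driven problem is a Lyapunov function.
   Recursive feasibility: drop the first step of the optimal prediction at time t
   and append the terminal control law u = u^s + K (xi - xi^s).  The result is a
   trajectory of the system, hence (fundamental lemma: controllability and
   persistency of excitation of order L + l + n give [X^d; H_{L+l}(u^d)] full row
   rank) a combination of the columns of the Hankel matrices, and its terminal
   extended state stays in Xi_f.  By the terminal decrease condition its cost is at
   most J_L^*(xi_t) minus the stage cost at t, so J_L^* decreases by at least
   lam |(u_t - u^s, y_t - y^s)|^2 while J_L^*(xi) <= c_u |xi - xi^s|^2 by (A2).
   Since |xi_t - xi^s|^2 is the sum of l consecutive such stage terms, J_L^* shrinks
   by the factor c_u / (c_u + lam) every l steps, and |xi_t - xi^s|^2 decays
   geometrically. *)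

Section BlockMatrices.
Variable R : realType.

Lemma blkcolE k d1 d2 (M : 'I_k -> 'M[R]_(d1, d2)) i j r :
  blkcol M (mxvec_index i j) r = M i j r.
Proof. by rewrite /blkcol /blkrow !mxE mxvecE !mxE. Qed.

Lemma blkrowE k d1 d2 (M : 'I_k -> 'M[R]_(d1, d2)) i j r :
  blkrow M r (mxvec_index i j) = M i r j.
Proof. by rewrite /blkrow !mxE mxvecE !mxE. Qed.

Lemma eq_blkcol k d1 d2 (f g : 'I_k -> 'M[R]_(d1, d2)) :
  (forall i, f i = g i) -> blkcol f = blkcol g.
Proof.
by move=> fg; apply/matrixP => r c; case/mxvec_indexP: r => i j; rewrite !blkcolE fg.
Qed.

Lemma blkcol_inj k d1 d2 (f g : 'I_k -> 'M[R]_(d1, d2)) :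
  blkcol f = blkcol g -> forall i, f i = g i.
Proof.
move=> fg i; apply/matrixP => j r.
by have := congr1 (fun M : 'M[R]_(k * d1, d2) => M (mxvec_index i j) r) fg; rewrite !blkcolE.
Qed.

Lemma sum_mxvec_index k d (F : 'I_(k * d) -> R) :
  \sum_r F r = \sum_(i < k) \sum_(j < d) F (mxvec_index i j).
Proof.
rewrite (reindex _ (curry_mxvec_bij _ _)) /= pair_bigA /=.
by apply: eq_bigr => -[i j].
Qed.

Lemma mul_blkrow_blkcol k d1 d2 d3 (M : 'I_k -> 'M[R]_(d1, d2)) (v : 'I_k -> 'M[R]_(d2, d3)) :
  blkrow M *m blkcol v = \sum_j M j *m v j.
Proof.
apply/matrixP => r c; rewrite !mxE summxE sum_mxvec_index.
apply: eq_bigr => i _; rewrite mxE; apply: eq_bigr => j _.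
by rewrite blkrowE blkcolE.
Qed.

Lemma mul_blkcol k d1 d2 d3 (M : 'I_k -> 'M[R]_(d1, d2)) (X : 'M[R]_(d2, d3)) :
  blkcol M *m X = blkcol (fun i => M i *m X).
Proof.
apply/matrixP => r c; case/mxvec_indexP: r => i j.
by rewrite blkcolE !mxE; apply: eq_bigr => s _; rewrite blkcolE.
Qed.

Lemma add_blkcol k d1 d2 (f g : 'I_k -> 'M[R]_(d1, d2)) :
  blkcol f + blkcol g = blkcol (fun i => f i + g i).
Proof.
by apply/matrixP => r c; case/mxvec_indexP: r => i j; rewrite mxE !blkcolE mxE.
Qed.

Lemma opp_blkcol k d1 d2 (f : 'I_k -> 'M[R]_(d1, d2)) :
  - blkcol f = blkcol (fun i => - f i).
Proof.
by apply/matrixP => r c; case/mxvec_indexP: r => i j; rewrite mxE !blkcolE mxE.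
Qed.

Lemma mul_blkmx_blkcol k d1 d2 d3 (M : 'I_k -> 'I_k -> 'M[R]_(d1, d2))
    (v : 'I_k -> 'M[R]_(d2, d3)) :
  blkmx M *m blkcol v = blkcol (fun i => \sum_j M i j *m v j).
Proof.
by rewrite /blkmx mul_blkcol; apply: eq_blkcol => i; rewrite mul_blkrow_blkcol.
Qed.

Lemma sqnorm_ge0 d (v : 'cV[R]_d) : 0 <= sqnorm v.
Proof. by apply: sumr_ge0 => i _; apply: sqr_ge0. Qed.

Lemma sqnorm_blkcol k d (v : 'I_k -> 'cV[R]_d) :
  sqnorm (blkcol v) = \sum_i sqnorm (v i).
Proof.
rewrite /sqnorm sum_mxvec_index; apply: eq_bigr => i _; apply: eq_bigr => j _.
by rewrite blkcolE.
Qed.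

Lemma sqnorm_col_mx d1 d2 (a : 'cV[R]_d1) (b : 'cV[R]_d2) :
  sqnorm (col_mx a b) = sqnorm a + sqnorm b.
Proof.
rewrite /sqnorm big_split_ord /=.
by congr (_ + _); apply: eq_bigr => i _; rewrite ?col_mxEu ?col_mxEd.
Qed.

End BlockMatrices.

Section Segments.
Variable R : realType.

Lemma eq_seg d (x x' : nat -> 'cV[R]_d) a a' k :
  (forall i : 'I_k, x (a + i)%N = x' (a' + i)%N) -> seg x a k = seg x' a' k.
Proof. exact: eq_blkcol. Qed.

Lemma seg_inj d (x x' : nat -> 'cV[R]_d) a a' k :
  seg x a k = seg x' a' k -> forall i, (i < k)%N -> x (a + i)%N = x' (a' + i)%N.
Proof. by move=> xx' i ik; exact: (blkcol_inj xx' (Ordinal ik)). Qed.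

Definition hankel_comb d N' (al : 'cV[R]_N') (x : nat -> 'cV[R]_d) (i : nat) : 'cV[R]_d :=
  \sum_(c < N') al c ord0 *: x (c + i)%N.

Lemma mul_hankel d T N (x : nat -> 'cV[R]_d) (al : 'cV[R]_(N - T).+1) :
  hankel T N x *m al = seg (hankel_comb al x) 0 T.
Proof.
apply/matrixP => r c; case/mxvec_indexP: r => i j.
rewrite /seg blkcolE !mxE /hankel_comb summxE; apply: eq_bigr => s _.
by rewrite !mxE mxvecE !mxE mulrC add0n (ord1 c).
Qed.

Lemma ext_state_inj l m p (u u' : nat -> 'cV[R]_m) (y y' : nat -> 'cV[R]_p) a b :
  ext_state l u y a = ext_state l u' y' b ->
  forall i, (i < l)%N -> u (a + i)%N = u' (b + i)%N /\ y (a + i)%N = y' (b + i)%N.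
Proof.
by move=> /eq_col_mx [eu ey] i il; split; [exact: seg_inj eu i il | exact: seg_inj ey i il].
Qed.

Lemma eq_ext_state l m p (u u' : nat -> 'cV[R]_m) (y y' : nat -> 'cV[R]_p) a b :
  (forall i, (i < l)%N -> u (a + i)%N = u' (b + i)%N /\ y (a + i)%N = y' (b + i)%N) ->
  ext_state l u y a = ext_state l u' y' b.
Proof.
by move=> uy; congr col_mx; apply: eq_seg => i; case: (uy i (ltn_ord i)).
Qed.

Lemma ext_state_subss l m p (u : nat -> 'cV[R]_m) (y : nat -> 'cV[R]_p) us ys a :
  ext_state l u y a - ext_ss l us ys =
  ext_state l (fun k => u k - us) (fun k => y k - ys) a.
Proof. by rewrite /ext_ss /ext_state opp_col_mx add_col_mx /seg !opp_blkcol !add_blkcol. Qed.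

Lemma sqnorm_ext_state l m p (u : nat -> 'cV[R]_m) (y : nat -> 'cV[R]_p) a :
  sqnorm (ext_state l u y a) = \sum_(i < l) (sqnorm (u (a + i)%N) + sqnorm (y (a + i)%N)).
Proof. by rewrite sqnorm_col_mx !sqnorm_blkcol big_split. Qed.

End Segments.

Section ExtendedDynamics.
Variables (R : realType) (l m p : nat).

Lemma mul_shift_seg d (x : nat -> 'cV[R]_d) a :
  shift_mx R l d *m seg x a l =
  blkcol (fun i : 'I_l => if (i.+1 < l)%N then x (a + i.+1)%N else 0).
Proof.
rewrite /shift_mx /seg mul_blkmx_blkcol; apply: eq_blkcol => i.
rewrite (eq_bigr (fun j : 'I_l => if (j : nat) == i.+1 then x (a + j)%N else 0)).
  by rewrite -big_mkcond (big_ord1_eq _ (fun j => x (a + j)%N)).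
by move=> j _; case: eqP; rewrite ?mul1mx ?mul0mx.
Qed.

Lemma mul_last_mx d d2 (X : 'M[R]_(d, d2)) :
  last_mx R l d *m X = blkcol (fun i : 'I_l => if (i : nat) == l.-1 then X else 0).
Proof.
by rewrite /last_mx mul_blkcol; apply: eq_blkcol => i; case: eqP; rewrite ?mul1mx ?mul0mx.
Qed.

Lemma shift_seg_last d (x : nat -> 'cV[R]_d) a :
  shift_mx R l d *m seg x a l + last_mx R l d *m x (a + l)%N = seg x (a + 1) l.
Proof.
rewrite mul_shift_seg mul_last_mx add_blkcol; apply: eq_blkcol => i.
have il := ltn_ord i; case: ltnP => h.
  have -> : ((i : nat) == l.-1) = false by apply/eqP; lia.
  by rewrite addr0; congr x; lia.
have -> : ((i : nat) == l.-1) = true by apply/eqP; lia.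
by rewrite add0r; congr x; lia.
Qed.

Lemma mul_Ct_ext_state (G : 'I_l -> 'M[R]_(p, m)) (F : 'I_l -> 'M[R]_(p, p)) u y a :
  Ct G F *m ext_state l u y a =
  \sum_(i < l) G i *m u (a + l - i.+1)%N + \sum_(i < l) F i *m y (a + l - i.+1)%N.
Proof.
rewrite /Ct /ext_state mul_row_col /Ct_u /Ct_y /seg !mul_blkrow_blkcol.
by congr (_ + _); rewrite (reindex_inj rev_ord_inj) /=; apply: eq_bigr => i _;
  rewrite rev_ordK /= addnBA.
Qed.

Lemma ext_state_step (G : 'I_l -> 'M[R]_(p, m)) (F : 'I_l -> 'M[R]_(p, p)) D u y a :
  y (a + l)%N = Ct G F *m ext_state l u y a + D *m u (a + l)%N ->
  At G F *m ext_state l u y a + Bt l D *m u (a + l)%N = ext_state l u y (a + 1).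
Proof.
move=> ya.
rewrite /At /Bt /ext_state mul_block_col mul_col_mx add_col_mx mul0mx addr0 shift_seg_last.
congr col_mx; rewrite -shift_seg_last ya /Ct mul_row_col.
by rewrite !mulmxDr !mulmxDl !mulmxA -!addrA addrCA.
Qed.

End ExtendedDynamics.

Section QuadraticForms.
Variable R : realType.

Definition qform d (P : 'I_d -> 'I_d -> R) (x : 'I_d -> R) : R :=
  \sum_i \sum_j x i * P i j * x j.
Definition sqsum d (x : 'I_d -> R) : R := \sum_i x i ^+ 2.

Lemma sqsum_ge0 d (x : 'I_d -> R) : 0 <= sqsum x.
Proof. by apply: sumr_ge0 => i _; apply: sqr_ge0. Qed.

Lemma cauchy_schwarz d (h x : 'I_d -> R) : (\sum_i h i * x i) ^+ 2 <= sqsum h * sqsum x.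
Proof.
have sq_prod : sqsum h * sqsum x = \sum_i \sum_j h i ^+ 2 * x j ^+ 2.
  by rewrite /sqsum mulr_suml; apply: eq_bigr => i _; rewrite mulr_sumr.
have sq_prod' : sqsum h * sqsum x = \sum_i \sum_j h j ^+ 2 * x i ^+ 2.
  by rewrite sq_prod exchange_big.
have -> : sqsum h * sqsum x =
    \sum_i \sum_j (h i ^+ 2 * x j ^+ 2 + h j ^+ 2 * x i ^+ 2) / 2.
  transitivity ((\sum_i \sum_j h i ^+ 2 * x j ^+ 2 + \sum_i \sum_j h j ^+ 2 * x i ^+ 2) / 2).
    by rewrite -sq_prod -sq_prod'; field.
  by rewrite -big_split mulr_suml; apply: eq_bigr => i _; rewrite -big_split mulr_suml.
rewrite expr2 mulr_suml; apply: ler_sum => i _.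
rewrite mulr_sumr; apply: ler_sum => j _.
have := sqr_ge0 (h i * x j - h j * x i); nra.
Qed.

Definition fcons d (x0 : R) (x' : 'I_d -> R) (i : 'I_d.+1) : R :=
  if unlift ord0 i is Some j then x' j else x0.

Lemma fconsK d (x : 'I_d.+1 -> R) : fcons (x ord0) (fun j => x (lift ord0 j)) = x.
Proof. by apply: funext => i; rewrite /fcons; case: unliftP => [j|] ->. Qed.

Lemma fcons0 d x0 (x' : 'I_d -> R) : fcons x0 x' ord0 = x0.
Proof. by rewrite /fcons unlift_none. Qed.

Lemma fcons_lift d x0 (x' : 'I_d -> R) j : fcons x0 x' (lift ord0 j) = x' j.
Proof. by rewrite /fcons liftK. Qed.

Lemma sqsum_fcons d x0 (x' : 'I_d -> R) : sqsum (fcons x0 x') = x0 ^+ 2 + sqsum x'.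
Proof.
by rewrite /sqsum big_ord_recl fcons0; under eq_bigr => j _ do rewrite fcons_lift.
Qed.

Section SchurComplement.
Variables (d : nat) (P : 'I_d.+1 -> 'I_d.+1 -> R).
Let a := P ord0 ord0.
Let h j := (P ord0 (lift ord0 j) + P (lift ord0 j) ord0) / 2.
Definition schur_compl i j := P (lift ord0 i) (lift ord0 j) - h i * h j / a.

Lemma qform_fcons x0 x' : a != 0 ->
  qform P (fcons x0 x') =
  a * (x0 + (\sum_j h j * x' j) / a) ^+ 2 + qform schur_compl x'.
Proof.
move=> a0; set b := \sum_j h j * x' j.
have row_i k : \sum_j fcons x0 x' (lift ord0 k) * P (lift ord0 k) j * fcons x0 x' j =
    x' k * P (lift ord0 k) ord0 * x0 + \sum_j x' k * P (lift ord0 k) (lift ord0 j) * x' j.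
  by rewrite big_ord_recl fcons0 fcons_lift; under eq_bigr => j _ do rewrite !fcons_lift.
have cross : \sum_(i < d) x0 * P ord0 (lift ord0 i) * x' i +
    \sum_(i < d) x' i * P (lift ord0 i) ord0 * x0
    = 2 * x0 * b.
  rewrite /b mulr_sumr -big_split /=; apply: eq_bigr => i _; by rewrite /h; field.
have schur_sq : \sum_(i < d) \sum_(j < d) x' i * (h i * h j / a) * x' j = b ^+ 2 / a.
  rewrite expr2 mulr_suml mulr_suml; apply: eq_bigr => i _.
  by rewrite mulr_sumr mulr_suml; apply: eq_bigr => j _; field.
rewrite /qform big_ord_recl big_ord_recl fcons0.
under eq_bigr => i _ do rewrite fcons_lift.
rewrite (eq_bigr _ (fun i _ => row_i i)) big_split /=.
rewrite addrA -(addrA (x0 * _ * x0)) cross.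
rewrite /schur_compl.
under [in RHS]eq_bigr => i _ do (under eq_bigr => j _ do rewrite mulrBr mulrBl; rewrite sumrB).
by rewrite sumrB schur_sq -/a; field.
Qed.

End SchurComplement.

Lemma completed_square_lb (a mu H x0 b s q : R) :
  0 < a -> 0 < mu -> 0 <= H -> 0 <= s -> b ^+ 2 <= H * s -> mu * s <= q ->
  x0 ^+ 2 + s <= (2 / a + (1 + 2 * H / a ^+ 2) / mu) * (a * (x0 + b / a) ^+ 2 + q).
Proof.
move=> a_gt0 mu_gt0 H_ge0 s_ge0 bHs smu.
set z := x0 + b / a; set k := 1 + 2 * H / a ^+ 2.
have k_ge0 : 0 <= k.
  by rewrite /k; apply: addr_ge0 => //; apply: divr_ge0; [apply: mulr_ge0 | apply: sqr_ge0].
have x0_le : x0 ^+ 2 <= 2 * z ^+ 2 + 2 * (b / a) ^+ 2.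
  have -> : x0 = z - b / a by rewrite /z addrK.
  have := sqr_ge0 (z + b / a); nra.
have ba_le : 2 * (b / a) ^+ 2 <= (k - 1) * s.
  have -> : (k - 1) * s = 2 * (H / a ^+ 2 * s) by rewrite /k; field; rewrite lt0r_neq0.
  by rewrite ler_pM2l // expr_div_n [_ / _ * s]mulrAC ler_pM2r // invr_gt0 exprn_gt0.
have z_eq : 2 * z ^+ 2 = 2 / a * (a * z ^+ 2) by field; rewrite lt0r_neq0.
have s_le : k * s <= k / mu * q.
  by rewrite -mulrA ler_wpM2l // ler_pdivlMl.
have q_ge0 : 0 <= q by apply: le_trans smu; apply: mulr_ge0; lra.
have : 0 <= 2 / a * q by apply: mulr_ge0 => //; apply: divr_ge0; lra.
have : 0 <= k / mu * (a * z ^+ 2).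
  by apply: mulr_ge0; [apply: divr_ge0; lra | apply: mulr_ge0; [lra | apply: sqr_ge0]].
have -> : (2 / a + k / mu) * (a * z ^+ 2 + q) =
    2 / a * (a * z ^+ 2) + 2 / a * q + k / mu * (a * z ^+ 2) + k / mu * q by ring.
have : (k - 1) * s = k * s - s by ring.
lra.
Qed.

(* Induction on d: completing the square in x_0 leaves the Schur complement,
   which is again positive definite. *)
Lemma qform_lb d (P : 'I_d -> 'I_d -> R) :
  (forall x, (exists i, x i != 0) -> 0 < qform P x) ->
  exists2 lam, 0 < lam & forall x, lam * sqsum x <= qform P x.
Proof.
elim: d P => [|d IH] P posP.
  by exists 1 => // x; rewrite /sqsum /qform !big_ord0 mulr0.
set a := P ord0 ord0.
set h := fun j => (P ord0 (lift ord0 j) + P (lift ord0 j) ord0) / 2.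
have a_gt0 : 0 < a.
  have <- : qform P (fcons 1 (fun _ => 0)) = a.
    rewrite /qform big_ord_recl big_ord_recl !fcons0.
    rewrite big1 => [|j _]; last by rewrite fcons_lift !mulr0.
    rewrite big1 => [|i _]; first by rewrite mulr1 mul1r !addr0.
    by rewrite fcons_lift big1 // => j _; rewrite !mul0r.
  by apply: posP; exists ord0; rewrite fcons0 oner_neq0.
have [mu mu_gt0 schur_lb] : exists2 mu, 0 < mu &
    forall x', mu * sqsum x' <= qform (schur_compl P) x'.
  apply: IH => x' [i x'i].
  have := posP (fcons (- (\sum_j h j * x' j) / a) x') (ex_intro _ (lift ord0 i) _).
  rewrite fcons_lift => /(_ x'i).
  by rewrite qform_fcons ?lt0r_neq0 // -/a -/h mulNr addNr expr0n /= mulr0 add0r.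
pose H := sqsum h.
pose c := 2 / a + (1 + 2 * H / a ^+ 2) / mu.
have c_gt0 : 0 < c.
  apply: ltr_pwDl; first by apply: divr_gt0.
  apply: divr_ge0; last exact: ltW.
  by apply: addr_ge0 => //; apply: divr_ge0;
    [apply: mulr_ge0 => //; apply: sqsum_ge0 | apply: sqr_ge0].
exists c^-1; first by rewrite invr_gt0.
move=> x; rewrite -(fconsK x) qform_fcons ?lt0r_neq0 // -/a sqsum_fcons.
rewrite mulrC ler_pdivrMr // mulrC.
by apply: completed_square_lb => //;
  [exact: sqsum_ge0 | exact: sqsum_ge0 | exact: cauchy_schwarz].
Qed.

Lemma qf_sum d (P : 'M[R]_d) x : qf P x = \sum_i \sum_j x i ord0 * P i j * x j ord0.
Proof.
rewrite /qf !mxE exchange_big /=; apply: eq_bigr => i _.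
by rewrite !mxE mulr_suml; apply: eq_bigr => j _; rewrite !mxE.
Qed.

Lemma posdef_lb d (P : 'M[R]_d) : posdef P ->
  exists2 lam, 0 < lam & forall x, lam * sqnorm x <= qf P x.
Proof.
move=> [_ posP].
have [lam lam_gt0 lamP] : exists2 lam, 0 < lam &
    forall x, lam * sqsum x <= qform (fun i j => P i j) x.
  apply: qform_lb => x [i xi].
  have x_neq0 : (\col_k x k : 'cV[R]_d) != 0.
    by apply/eqP => /matrixP /(_ i ord0); rewrite !mxE; apply/eqP.
  have := posP _ x_neq0; rewrite qf_sum /qform.
  by under eq_bigr => a _ do under eq_bigr => b _ do rewrite !mxE.
by exists lam => // x; have := lamP (fun i => x i ord0); rewrite qf_sum.
Qed.

Lemma qf0 d (P : 'M[R]_d) : qf P 0 = 0.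
Proof. by rewrite /qf mulmx0 mxE. Qed.

Lemma qf_ge0 d (P : 'M[R]_d) x : posdef P -> 0 <= qf P x.
Proof.
move=> [_ posP]; have [->|x_neq0] := eqVneq x 0; first by rewrite qf0.
exact: ltW (posP _ x_neq0).
Qed.

Lemma qf_le0_eq0 d (P : 'M[R]_d) x : posdef P -> qf P x <= 0 -> x = 0.
Proof.
move=> [_ posP] qx; have [//|x_neq0] := eqVneq x 0.
by have := posP _ x_neq0; rewrite ltNge qx.
Qed.

Lemma qf_mulmx d e (K : 'M[R]_(e, d)) (W : 'M[R]_e) v :
  qf (K^T *m W *m K) v = qf W (K *m v).
Proof. by rewrite /qf trmx_mul !mulmxA. Qed.

End QuadraticForms.

Lemma Cayley_Hamilton_coef (R : comNzRingType) n (A : 'M[R]_n) :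
  \sum_(k < n.+1) (char_poly A)`_k *: A ^+ k = 0.
Proof.
case: n A => [|n] A; first by apply/matrixP => -[].
rewrite -[RHS](Cayley_Hamilton A) -[in RHS](coefK (char_poly A)).
rewrite size_char_poly poly_def rmorph_sum /=.
by apply: eq_bigr => k _; rewrite horner_mxZ rmorphXn /= horner_mx_X.
Qed.

Lemma char_poly_coefn (R : comNzRingType) n (A : 'M[R]_n) : (char_poly A)`_n = 1.
Proof. by have /monicP := char_poly_monic A; rewrite lead_coefE size_char_poly. Qed.

Lemma mulmx_exprS (R : pzRingType) n (A : 'M[R]_n) k : A *m A ^+ k = A ^+ k.+1.
Proof. by rewrite exprS mulmxE. Qed.

Section FundamentalLemma.
Variables (R : realType) (n m p : nat).
Variables (A : 'M[R]_n) (B : 'M[R]_(n, m)) (C : 'M[R]_(p, n)) (D : 'M[R]_(p, m)).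

Lemma state_solution (x : nat -> 'cV[R]_n) (u : nat -> 'cV[R]_m) a k :
  (forall j, (a <= j < a + k)%N -> x j.+1 = A *m x j + B *m u j) ->
  x (a + k)%N = A ^+ k *m x a + \sum_(i < k) A ^+ (k.-1 - i) *m B *m u (a + i)%N.
Proof.
elim: k => [|k IH] x_step; first by rewrite addn0 expr0 mul1mx big_ord0 addr0.
rewrite addnS x_step; last by rewrite leq_addr /= ltn_add2l.
rewrite IH => [|j /andP[j1 j2]]; last by apply: x_step; lia.
rewrite big_ord_recr /= subnn expr0 mul1mx mulmxDr mulmxA mulmx_exprS addrA.
congr (_ + _ + _); rewrite mulmx_sumr; apply: eq_bigr => i _.
rewrite !mulmxA mulmx_exprS; congr (_ *m _ *m _); congr (_ ^+ _); have := ltn_ord i; lia.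
Qed.

Lemma hankel_comb_lin d1 d2 d3 N' (al : 'cV[R]_N') (h : nat -> 'cV[R]_d3)
    (f : nat -> 'cV[R]_d1) (g : nat -> 'cV[R]_d2) (M1 : 'M[R]_(d3, d1)) (M2 : 'M[R]_(d3, d2)) i :
  (forall c : 'I_N', h (c + i)%N = M1 *m f (c + i)%N + M2 *m g (c + i)%N) ->
  hankel_comb al h i = M1 *m hankel_comb al f i + M2 *m hankel_comb al g i.
Proof.
move=> hfg; rewrite /hankel_comb !mulmx_sumr -big_split /=; apply: eq_bigr => c _.
by rewrite hfg scalerDr !scalemxAr.
Qed.

Lemma hankel_comb_traj N T (ud : nat -> 'cV[R]_m) (yd : nat -> 'cV[R]_p)
    (xd : nat -> 'cV[R]_n) (al : 'cV[R]_(N - T).+1) :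
  (T <= N)%N ->
  (forall k, (k < N)%N -> yd k = C *m xd k + D *m ud k) ->
  (forall k, (k.+1 < N)%N -> xd k.+1 = A *m xd k + B *m ud k) ->
  (forall i, (i.+1 < T)%N ->
     hankel_comb al xd i.+1 = A *m hankel_comb al xd i + B *m hankel_comb al ud i) /\
  (forall i, (i < T)%N ->
     hankel_comb al yd i = C *m hankel_comb al xd i + D *m hankel_comb al ud i).
Proof.
move=> TN yd_out xd_step; split => i iT.
  have -> : hankel_comb al xd i.+1 = hankel_comb al (fun k => xd k.+1) i.
    by apply: eq_bigr => c _; rewrite addnS.
  by apply: hankel_comb_lin => c; apply: xd_step; have := ltn_ord c; lia.
by apply: hankel_comb_lin => c; apply: yd_out; have := ltn_ord c; lia.
Qed.

Lemma pers_exc_left_kernel N K (ud : nat -> 'cV[R]_m) (V : nat -> 'rV[R]_m) :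
  pers_exc N K ud ->
  (forall c : 'I_(N - K).+1, \sum_(i < K) V i *m ud (c + i)%N = 0) ->
  forall i, (i < K)%N -> V i = 0.
Proof.
move=> [KN rankH] V_ker.
set Vb := blkrow (fun i : 'I_K => V i).
have VbH : Vb *m hankel K N ud = 0.
  apply/matrixP => r c; rewrite (ord1 r) !mxE sum_mxvec_index.
  transitivity ((\sum_(i < K) V i *m ud (c + i)%N) ord0 ord0); last by rewrite V_ker mxE.
  rewrite summxE; apply: eq_bigr => i _; rewrite !mxE; apply: eq_bigr => j _.
  by rewrite blkrowE !mxE mxvecE !mxE.
have Vb0 : Vb = 0.
  have freeH : row_free (hankel K N ud) by rewrite /row_free rankH mulnC.
  by apply: (row_free_inj freeH); rewrite VbH mul0mx.
move=> i iK; apply/matrixP => a j; rewrite (ord1 a).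
have := congr1 (fun M : 'rV[R]_(K * m) => M ord0 (mxvec_index (Ordinal iK) j)) Vb0.
by rewrite blkrowE !mxE.
Qed.

Section DataMatrixRank.
Variables (T N : nat) (ud : nat -> 'cV[R]_m) (xd : nat -> 'cV[R]_n).
Hypotheses (T_gt0 : (0 < T)%N) (ctrbAB : controllable A B) (pe_ud : pers_exc N (T + n) ud)
  (xd_step : forall k, (k.+1 < N)%N -> xd k.+1 = A *m xd k + B *m ud k).
Variables (xi : 'rV[R]_n) (eta : nat -> 'rV[R]_m).
Hypotheses (eta_ge : forall i, (T <= i)%N -> eta i = 0)
  (xi_eta_ker : forall c : 'I_(N - T).+1,
     xi *m xd c + \sum_(i < T) eta i *m ud (c + i)%N = 0).

(* [w k] are the coefficients of u^d in the kernel relation at column c + k once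
   x^d (c + k) is expanded from x^d c; combining the shifts k <= n with the
   coefficients of the characteristic polynomial eliminates x^d (Cayley-Hamilton),
   and persistency of excitation then forces the combined coefficients [W] to vanish. *)
Let w k i := if (i < k)%N then xi *m A ^+ (k.-1 - i) *m B else eta (i - k)%N.
Let W i := \sum_(k < n.+1) (char_poly A)`_k *: w k i.

Let shifted_ker k c : (k <= n)%N -> (c + k <= N - T)%N ->
  xi *m A ^+ k *m xd c + \sum_(i < T + n) w k i *m ud (c + i)%N = 0.
Proof.
move=> kn ck; have := xi_eta_ker (Ordinal (ck : (c + k < (N - T).+1)%N)) => /=.
rewrite (state_solution (x := xd) (u := ud)) => [|j /andP[j1 j2]]; last first.
  by apply: xd_step; have [TnN _] := pe_ud; lia.
move=> ker; rewrite -[X in _ = X]ker mulmxDr mulmxA -addrA; congr (_ + _).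
rewrite -(big_mkord xpredT (fun i => w k i *m ud (c + i)%N)).
rewrite (big_cat_nat (leq0n k)) /=; last lia.
rewrite big_mkord mulmx_sumr; congr (_ + _).
  by apply: eq_bigr => i _; rewrite /w ltn_ord !mulmxA.
rewrite -{1}(add0n k) big_addn (big_cat_nat (leq0n T)) /=; last lia.
rewrite big_mkord [X in _ + X]big1_seq ?addr0 => [|i].
  by apply: eq_bigr => i _; rewrite /w ltnNge leq_addl /= addnK; congr (_ *m ud _); lia.
move=> /andP[_]; rewrite mem_index_iota => /andP[i1 i2].
by rewrite /w ltnNge leq_addl /= addnK eta_ge ?mul0mx.
Qed.

Let W_eq0 i : (i < T + n)%N -> W i = 0.
Proof.
move: i; apply: (pers_exc_left_kernel pe_ud) => c.
have : \sum_(k < n.+1) (char_poly A)`_k *: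
    (xi *m A ^+ k *m xd c + \sum_(i < T + n) w k i *m ud (c + i)%N) = 0.
  apply: big1 => k _; rewrite shifted_ker ?scaler0 //; first by have := ltn_ord k; lia.
  by have [TnN _] := pe_ud; have := ltn_ord c; have := ltn_ord k; lia.
under eq_bigr => k _ do rewrite scalerDr.
rewrite big_split /=.
have -> : \sum_(k < n.+1) (char_poly A)`_k *: (xi *m A ^+ k *m xd c) = 0.
  under eq_bigr => k _ do rewrite scalemxAl scalemxAr.
  by rewrite -mulmx_suml -mulmx_sumr Cayley_Hamilton_coef mulmx0 mul0mx.
rewrite add0r => ker; rewrite -[X in _ = X]ker; under [RHS]eq_bigr => k _ do rewrite scaler_sumr.
rewrite exchange_big /=; apply: eq_bigr => i _.
by rewrite /W mulmx_suml; apply: eq_bigr => k _; rewrite scalemxAl.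
Qed.

(* W (n + s) is eta s plus a combination of the eta (s + j), j > 0. *)
Let eta_eq0 s : eta s = 0.
Proof.
suff eta_ge_d d : (T <= s + d)%N -> eta s = 0 by apply: (eta_ge_d T); rewrite leq_addl.
elim: d s => [|d IH] s; first by rewrite addn0; apply: eta_ge.
have [/IH //|sdT sdT1] := leqP T (s + d).
have := W_eq0 (ltac:(lia) : (n + s < T + n)%N).
rewrite /W big_ord_recr /= char_poly_coefn scale1r /w ltnNge leq_addr /= addKn.
rewrite big1 ?add0r => [-> //|k _].
rewrite ltnNge (leq_trans (ltnW (ltn_ord k))) ?leq_addr //=.
by rewrite IH ?scaler0 //; have := ltn_ord k; lia.
Qed.

Let xi_AkB_eq0 j : (j < n)%N -> xi *m A ^+ j *m B = 0.
Proof.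
elim/ltn_ind: j => j IH jn.
have := W_eq0 (ltac:(lia) : (n.-1 - j < T + n)%N).
rewrite /W big_ord_recr /= char_poly_coefn scale1r.
have -> : w n (n.-1 - j)%N = xi *m A ^+ j *m B.
  by rewrite /w ifT; [congr (_ *m _ ^+ _ *m _) |]; lia.
rewrite big1 ?add0r => [-> //|k _].
rewrite /w; case: ifP => [ik|_]; last by rewrite eta_eq0 scaler0.
by rewrite IH ?scaler0 //; have := ltn_ord k; lia.
Qed.

Lemma data_left_kernel_eq0 : xi = 0 /\ forall i, eta i = 0.
Proof.
split=> //; have freeCtrb : row_free (blkrow (fun i : 'I_n => A ^+ i *m B)).
  by rewrite /row_free ctrbAB.
apply: (row_free_inj freeCtrb); rewrite mul0mx.
apply/matrixP => a r; rewrite (ord1 a); case/mxvec_indexP: r => i j.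
rewrite mxE [RHS]mxE.
have := congr1 (fun M : 'rV[R]_m => M ord0 j) (xi_AkB_eq0 (ltn_ord i)).
by rewrite -mulmxA !mxE; apply: etrans; apply: eq_bigr => r _; rewrite blkrowE.
Qed.

End DataMatrixRank.

Lemma data_mx_row_free T N (ud : nat -> 'cV[R]_m) (xd : nat -> 'cV[R]_n) :
  (0 < T)%N -> controllable A B -> pers_exc N (T + n) ud ->
  (forall k, (k.+1 < N)%N -> xd k.+1 = A *m xd k + B *m ud k) ->
  row_free (col_mx (\matrix_(r < n, c < (N - T).+1) xd c r ord0) (hankel T N ud)).
Proof.
move=> T_gt0 ctrbAB pe_ud xd_step; apply: inj_row_free => v vM.
set xi := lsubmx v; set et := rsubmx v.
pose eta i : 'rV[R]_m :=
  if insub i is Some o then \row_j et ord0 (mxvec_index (o : 'I_T) j) else 0.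
have etaE (o : 'I_T) : eta o = \row_j et ord0 (mxvec_index o j).
  by rewrite /eta; case: insubP => [o' _ /val_inj -> //|]; rewrite ltn_ord.
have eta_ge i : (T <= i)%N -> eta i = 0.
  by move=> iT; rewrite /eta; case: insubP => [o'|//]; rewrite ltnNge iT.
have ker (c : 'I_(N - T).+1) : xi *m xd c + \sum_(i < T) eta i *m ud (c + i)%N = 0.
  apply/matrixP => a b; rewrite (ord1 a) (ord1 b).
  have vMc := congr1 (fun M : 'rV[R]_(N - T).+1 => M ord0 c) vM.
  rewrite /= -(hsubmxK v) mul_row_col -/xi -/et !mxE in vMc.
  rewrite [RHS]mxE -[X in _ = X]vMc !mxE summxE; congr (_ + _).
    by apply: eq_bigr => r _; rewrite !mxE.
  rewrite sum_mxvec_index; apply: eq_bigr => i _; rewrite etaE !mxE.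
  by apply: eq_bigr => j _; rewrite !mxE mxvecE !mxE.
have [xi0 eta0] := data_left_kernel_eq0 T_gt0 ctrbAB pe_ud xd_step eta_ge ker.
have et0 : et = 0.
  apply/matrixP => a r; rewrite (ord1 a); case/mxvec_indexP: r => i j.
  by have := congr1 (fun M : 'rV[R]_m => M ord0 j) (eta0 i); rewrite etaE !mxE.
by rewrite -(hsubmxK v) -/xi -/et xi0 et0 row_mx0.
Qed.

Lemma fundamental_lemma T N (ud : nat -> 'cV[R]_m) (yd : nat -> 'cV[R]_p) :
  (0 < T)%N -> controllable A B -> is_traj A B C D N ud yd -> pers_exc N (T + n) ud ->
  forall (u : nat -> 'cV[R]_m) (y : nat -> 'cV[R]_p) (x : nat -> 'cV[R]_n),
  (forall j, (j.+1 < T)%N -> x j.+1 = A *m x j + B *m u j) ->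
  (forall j, (j < T)%N -> y j = C *m x j + D *m u j) ->
  exists al : 'cV[R]_(N - T).+1,
    forall i, (i < T)%N -> u i = hankel_comb al ud i /\ y i = hankel_comb al yd i.
Proof.
move=> T_gt0 ctrbAB [xd [yd_out xd_step]] pe_ud u y x x_step y_out.
have [TnN _] := pe_ud.
set Xd := \matrix_(r < n, c < (N - T).+1) xd c r ord0.
have [Minv MinvK] := row_freeP (data_mx_row_free T_gt0 ctrbAB pe_ud xd_step).
pose al := Minv *m col_mx (x 0%N) (seg u 0 T).
have : col_mx Xd (hankel T N ud) *m al = col_mx (x 0%N) (seg u 0 T).
  by rewrite /al mulmxA MinvK mul1mx.
rewrite mul_col_mx => /eq_col_mx[x0E uE].
have Xd_al : Xd *m al = hankel_comb al xd 0.
  apply/matrixP => r k; rewrite !mxE summxE; apply: eq_bigr => c _.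
  by rewrite !mxE addn0 (ord1 k) mulrC.
rewrite mul_hankel in uE; rewrite Xd_al in x0E.
have u_comb i : (i < T)%N -> u i = hankel_comb al ud i.
  by move=> iT; have := seg_inj uE iT; rewrite !add0n.
have [comb_step comb_out] := hankel_comb_traj al (leq_trans (leq_addr _ _) TnN) yd_out xd_step.
have x_comb i : (i < T)%N -> hankel_comb al xd i = x i.
  elim: i => [|i IH] iT; first by rewrite x0E.
  by rewrite comb_step // IH ?x_step -?u_comb // ltnW.
exists al => i iT; split; first exact: u_comb.
by rewrite comb_out // x_comb // -u_comb // y_out.
Qed.

End FundamentalLemma.

Section ExponentialDecay.
Variable R : realType.

Lemma bernoulli_ineq (x : R) k : 0 <= x <= 1 -> 1 - k%:R * x <= (1 - x) ^+ k.
Proof.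
move=> /andP[x_ge0 x_le1]; elim: k => [|k IH]; first by rewrite mul0r subr0 expr0.
rewrite exprSr -natr1.
have := ler_wpM2r (ltac:(lra) : 0 <= 1 - x) IH.
have : 0 <= k%:R * x * x by rewrite !mulr_ge0.
nra.
Qed.

Lemma exists_root_ge (rho : R) l : 0 < rho < 1 ->
  exists2 gamma, 0 < gamma < 1 & rho <= gamma ^+ l.
Proof.
move=> /andP[rho_gt0 rho_lt1].
have l1_gt0 : 0 < l.+1%:R :> R by rewrite ltr0n.
have l1_ge1 : 1 <= l.+1%:R :> R by rewrite ler1n.
have x_le1 : (1 - rho) / l.+1%:R <= 1 by rewrite ler_pdivrMr // mul1r; lra.
exists (1 - (1 - rho) / l.+1%:R).
  by rewrite subr_gt0 ltrBlDr ltrDl ltr_pdivrMr // mul1r divr_gt0 //=; lra.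
apply: le_trans (bernoulli_ineq l _); last by rewrite x_le1 divr_ge0 //; lra.
have : l%:R / l.+1%:R <= 1 :> R by rewrite ler_pdivrMr // mul1r ler_nat.
rewrite mulrA [_ * (1 - rho)]mulrC -mulrA; set q := l%:R / l.+1%:R.
have : 0 <= q by apply: divr_ge0.
nra.
Qed.

Section WindowedLyapunov.
Variables (l : nat) (lam cu gamma : R) (V e : nat -> R).
Hypotheses (l_gt0 : (0 < l)%N) (lam_gt0 : 0 < lam) (cu_gt0 : 0 < cu)
  (gamma_gt0 : 0 < gamma) (gamma_lt1 : gamma < 1)
  (gamma_l : cu / (cu + lam) <= gamma ^+ l).
Local Notation S t := (\sum_(i < l) e (t + i)%N).
Hypotheses (e_ge0 : forall j, 0 <= e j) (V_ge0 : forall t, 0 <= V t)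
  (V_decr : forall t, V t.+1 <= V t - lam * e (l + t)%N)
  (V_ub : forall t, V t <= cu * S t).

Let S_ge0 t : 0 <= S t. Proof. exact: sumr_ge0. Qed.

Lemma V_telescope t k : lam * \sum_(i < k) e (l + t + i)%N <= V t - V (t + k)%N.
Proof.
elim: k => [|k IH]; first by rewrite big_ord0 mulr0 addn0 subrr.
by rewrite big_ord_recr /= mulrDr addnS; have := V_decr (t + k); rewrite addnA; lra.
Qed.

Lemma V_nonincr t k : V (t + k)%N <= V t.
Proof.
have := V_telescope t k.
have : 0 <= lam * \sum_(i < k) e (l + t + i)%N by rewrite mulr_ge0 ?sumr_ge0 // ltW.
lra.
Qed.

Lemma lam_window_le_Vdiff t : lam * S (t + l) <= V t - V (t + l)%N.
Proof. by under eq_bigr => i _ do rewrite (addnC t l); exact: V_telescope. Qed.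

Lemma V_window_contract t : V (t + l)%N <= cu / (cu + lam) * V t.
Proof.
have h1 := ler_wpM2l (ltW cu_gt0) (lam_window_le_Vdiff t).
have h2 := ler_wpM2l (ltW lam_gt0) (V_ub (t + l)).
rewrite mulrAC ler_pdivlMr ?addr_gt0 //.
rewrite mulrCA in h2; nra.
Qed.

Lemma V_geometric t : V t <= gamma ^+ t / gamma ^+ l * V 0%N.
Proof.
have gl_gt0 : 0 < gamma ^+ l by rewrite exprn_gt0.
elim/ltn_ind: t => t IH.
have [tl|lt] := ltnP t l.
  apply: le_trans (V_nonincr 0 t) _; rewrite -[X in X <= _]mul1r ler_wpM2r //.
  by rewrite ler_pdivlMr // mul1r ler_wiXn2l // ?ltW // ltnW.
have tl_lt : (t - l < t)%N by rewrite ltn_subrL l_gt0 (leq_trans l_gt0 lt).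
rewrite -(subnK lt).
have -> : gamma ^+ (t - l + l) / gamma ^+ l * V 0%N =
    gamma ^+ l * (gamma ^+ (t - l) / gamma ^+ l * V 0%N).
  by rewrite exprD; field; rewrite lt0r_neq0.
apply: le_trans (V_window_contract _) _.
apply: le_trans (ler_wpM2r (V_ge0 _) gamma_l) _.
by rewrite ler_pM2l // IH.
Qed.

Lemma lam_window_le_V t : lam * S (t + l) <= V t.
Proof. by have := lam_window_le_Vdiff t; have := V_ge0 (t + l); lra. Qed.

Let sum_ord_add (f : nat -> R) a b :
  \sum_(i < a + b) f i = \sum_(i < a) f i + \sum_(i < b) f (a + i)%N.
Proof. by rewrite big_split_ord. Qed.

Lemma window_le_first_two t : (t <= l)%N -> S t <= S 0 + S l.
Proof.
move=> tl; have -> : S 0 = \sum_(i < l) e i by apply: eq_bigr => i _; rewrite add0n.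
rewrite -sum_ord_add.
have -> : (l + l = t + l + (l - t))%N by lia.
rewrite !sum_ord_add.
have : 0 <= \sum_(i < t) e i by apply: sumr_ge0.
have : 0 <= \sum_(i < l - t) e (t + l + i)%N by apply: sumr_ge0.
lra.
Qed.

Lemma windowed_lyapunov_decay t :
  S t <= (1 + cu / lam) / gamma ^+ (l + l) * gamma ^+ t * S 0.
Proof.
have g2l_gt0 : 0 < gamma ^+ (l + l) by rewrite exprn_gt0.
have cl_gt0 : 0 < cu / lam by rewrite divr_gt0.
have S0_ge0 := S_ge0 0.
have [tl|lt] := ltnP t l.
  have Sl_le : S l <= cu / lam * S 0.
    rewrite mulrAC ler_pdivlMr // mulrC.
    by have := lam_window_le_V 0; rewrite add0n => /le_trans; apply; rewrite -[0%N]/(0 + 0)%N.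
  have g_ge1 : 1 <= gamma ^+ t / gamma ^+ (l + l).
    by rewrite ler_pdivlMr // mul1r ler_wiXn2l ?ltW // (leq_trans (ltnW tl)) ?leq_addr.
  have -> : (1 + cu / lam) / gamma ^+ (l + l) * gamma ^+ t * S 0 =
      (1 + cu / lam) * S 0 * (gamma ^+ t / gamma ^+ (l + l)).
    by field; rewrite !lt0r_neq0.
  apply: le_trans (window_le_first_two (ltnW tl)) _.
  apply: le_trans (ler_peMr _ g_ge1); last by rewrite mulr_ge0 // addr_ge0 // ltW.
  by rewrite mulrDl mul1r lerD2l.
have -> : (1 + cu / lam) / gamma ^+ (l + l) * gamma ^+ t * S 0 =
    (1 + cu / lam) * (gamma ^+ (t - l) / gamma ^+ l * S 0).
  by rewrite -[in gamma ^+ t](subnK lt) !exprD; field; rewrite !lt0r_neq0 ?exprn_gt0.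
have g_ge0 : 0 <= gamma ^+ (t - l) / gamma ^+ l.
  by apply: divr_ge0; apply: exprn_ge0; apply: ltW.
have gS_ge0 : 0 <= gamma ^+ (t - l) / gamma ^+ l * S 0 by apply: mulr_ge0.
apply: le_trans (_ : cu / lam * (gamma ^+ (t - l) / gamma ^+ l * S 0) <= _); last first.
  by rewrite ler_wpM2r // lerDr.
have hV := lam_window_le_V (t - l); rewrite subnK // in hV.
have hG := ler_wpM2l g_ge0 (V_ub 0); rewrite mulrCA in hG.
rewrite mulrAC ler_pdivlMr // mulrC.
by apply: le_trans hV _; apply: le_trans (V_geometric _) hG.
Qed.

End WindowedLyapunov.
End ExponentialDecay.

Section ExtendedStateOutput.
Variables (R : realType) (n m p l : nat).
Variables (A : 'M[R]_n) (B : 'M[R]_(n, m)) (C : 'M[R]_(p, n)) (D : 'M[R]_(p, m)).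
Variables (G : 'I_l -> 'M[R]_(p, m)) (F : 'I_l -> 'M[R]_(p, p)).
Hypothesis GF_ext : ext_dyn A B C D G F.

Lemma ext_dyn_output T u y k : is_traj A B C D T u y -> (l <= k < T)%N ->
  y k = Ct G F *m ext_state l u y (k - l) + D *m u k.
Proof.
move=> traj /andP[lk kT]; rewrite mul_Ct_ext_state subnK // (GF_ext traj lk kT).
by congr (_ + _ + _); apply: eq_bigr => i _; rewrite subnK.
Qed.

Lemma shifted_traj (u : nat -> 'cV[R]_m) (y : nat -> 'cV[R]_p) (x : nat -> 'cV[R]_n) a T :
  (forall j, x j.+1 = A *m x j + B *m u j) -> (forall j, y j = C *m x j + D *m u j) ->
  is_traj A B C D T (fun k => u (a + k)%N) (fun k => y (a + k)%N).
Proof. by move=> x_step y_out; exists (fun k => x (a + k)%N); split=> k _; rewrite ?addnS. Qed.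

End ExtendedStateOutput.

Definition shift_append (X : Type) (T : nat) (x : nat -> X) (z : X) (k : nat) : X :=
  if (k < T)%N then x k.+1 else z.

Section MPC.
Variables (R : realType) (n m p : nat)
  (A : 'M[R]_n) (B : 'M[R]_(n, m)) (C : 'M[R]_(p, n)) (D : 'M[R]_(p, m))
  (l : nat) (G : 'I_l -> 'M[R]_(p, m)) (F : 'I_l -> 'M[R]_(p, p))
  (N : nat) (ud : nat -> 'cV[R]_m) (yd : nat -> 'cV[R]_p)
  (U : set 'cV[R]_m) (Y : set 'cV[R]_p) (us : 'cV[R]_m) (ys : 'cV[R]_p)
  (Qw : 'M[R]_p) (Rw : 'M[R]_m) (L : nat)
  (P : 'M[R]_(l * m + l * p)) (K : 'M[R]_(m, l * m + l * p)) (Xf : set 'cV[R]_(l * m + l * p)).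
Hypotheses (ctrbAB : controllable A B) (GF_ext : ext_dyn A B C D G F)
  (data_traj : is_traj A B C D N ud yd) (Q_pd : posdef Qw) (R_pd : posdef Rw)
  (L_gt0 : (0 < L)%N) (P_pd : posdef P) (pe_ud : pers_exc N (L + l + n) ud)
  (terminal : forall xi, Xf xi ->
     let xs := ext_ss l us ys in
     let u := us + K *m (xi - xs) in
     let y := Ct G F *m xi + D *m u in
     [/\ Xf (At G F *m xi + Bt l D *m u),
         U u /\ Y y &
         qf P ((At G F + Bt l D *m K) *m (xi - xs))
           <= qf P (xi - xs) - qf (K^T *m Rw *m K) (xi - xs) - qf Qw (y - ys)]).

Local Notation xs := (ext_ss l us ys).
Local Notation cost := (ocp_cost L us ys Qw Rw P).
Local Notation feas_sol := (ocp_feasible_sol L N ud yd U Y Xf).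
Local Notation opt_sol := (ocp_optimal_sol L N ud yd U Y us ys Qw Rw P Xf).
Local Notation feasible := (ocp_feasible L N ud yd U Y Xf).
Local Notation value := (ocp_value L N ud yd U Y us ys Qw Rw P Xf).
Local Notation stage u y := (qf Rw (u - us) + qf Qw (y - ys)).

Lemma ocp_cost_ge0 ub yb : 0 <= cost ub yb.
Proof.
rewrite /ocp_cost addr_ge0 ?qf_ge0 //.
by apply: sumr_ge0 => k _; rewrite addr_ge0 ?qf_ge0.
Qed.

Lemma ocp_value_le xi al ub yb : feas_sol xi al ub yb -> value xi <= cost ub yb.
Proof.
move=> sol; apply: ge_inf; last by exists al, ub, yb.
by exists 0 => c [a [u' [y' [_ ->]]]]; apply: ocp_cost_ge0.
Qed.

Lemma ocp_value_opt xi al ub yb : opt_sol xi al ub yb -> value xi = cost ub yb.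
Proof.
move=> [sol opt]; apply/le_anti; rewrite (ocp_value_le sol) /=.
apply: lb_le_inf; first by exists (cost ub yb), al, ub, yb.
by move=> c [a [u' [y' [sol' ->]]]]; apply: opt sol'.
Qed.

Lemma feasible_sol_traj xi al ub yb : feas_sol xi al ub yb -> is_traj A B C D (L + l) ub yb.
Proof.
move=> [ub_H yb_H _ _ _]; rewrite !mul_hankel in ub_H yb_H.
have [xd [yd_out xd_step]] := data_traj.
have ub_comb j : (j < L + l)%N -> ub j = hankel_comb al ud j.
  by move=> jT; have := seg_inj ub_H jT; rewrite !add0n.
have yb_comb j : (j < L + l)%N -> yb j = hankel_comb al yd j.
  by move=> jT; have := seg_inj yb_H jT; rewrite !add0n.
have [TN _] := pe_ud.
have [comb_step comb_out] := hankel_comb_traj al (ltac:(lia) : (L + l <= N)%N) yd_out xd_step.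
exists (hankel_comb al xd); split => j jT.
  by rewrite yb_comb // comb_out // ub_comb.
by rewrite comb_step // ub_comb //; lia.
Qed.

Lemma traj_feasible_sol xi (ub : nat -> 'cV[R]_m) (yb : nat -> 'cV[R]_p) :
  is_traj A B C D (L + l) ub yb ->
  ext_state l ub yb 0 = xi -> Xf (ext_state l ub yb L) ->
  (forall k, (k < L)%N -> U (ub (l + k)%N) /\ Y (yb (l + k)%N)) ->
  exists al, feas_sol xi al ub yb.
Proof.
move=> [xb [yb_out xb_step]] xiE term cstr.
have [al alP] := fundamental_lemma (ltac:(lia) : (0 < L + l)%N) ctrbAB data_traj pe_ud
  xb_step yb_out.
by exists al; split => //; rewrite mul_hankel; apply: eq_seg => i /=;
  rewrite add0n; case: (alP i (ltn_ord i)).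
Qed.

Lemma ss_output : Xf xs -> Ct G F *m xs + D *m us = ys.
Proof.
move=> Xf_xs; have [_ _] := terminal Xf_xs.
rewrite !subrr !mulmx0 addr0 !qf0 subrr sub0r oppr_ge0 => qy.
by apply/eqP; rewrite -subr_eq0; apply/eqP; apply: qf_le0_eq0 Q_pd qy.
Qed.

Lemma ss_ext_fixed : Ct G F *m xs + D *m us = ys -> At G F *m xs + Bt l D *m us = xs.
Proof.
move=> ysE; have := @ext_state_step R l m p G F D (fun _ => us) (fun _ => ys) 0%N.
by rewrite /= add0n => -> //; apply: eq_ext_state.
Qed.

Local Notation T := (L + l).-1.

Lemma cost_shift_append ub yb un yn :
  cost (shift_append T ub un) (shift_append T yb yn) + stage (ub l) (yb l)
    + qf P (ext_state l ub yb L - xs) =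
  cost ub yb + stage un yn
    + qf P (ext_state l (shift_append T ub un) (shift_append T yb yn) L - xs).
Proof.
rewrite /ocp_cost; case: L L_gt0 => // L' _.
rewrite big_ord_recr big_ord_recl /= /shift_append addn0.
rewrite [(l + L' < _)%N]ltnNge [(L' + l)%N]addnC leqnn /=.
under eq_bigr => i _ do rewrite ifT ?ltn_add2l // ifT ?ltn_add2l //.
under [X in _ = _ + X + _ + _ + _]eq_bigr => i _ do rewrite /bump add1n addnS.
ring.
Qed.

Section ClosedLoopStep.
Variables (u : nat -> 'cV[R]_m) (y : nat -> 'cV[R]_p) (x : nat -> 'cV[R]_n).
Hypotheses (x_step : forall j, x j.+1 = A *m x j + B *m u j)
  (y_out : forall j, y j = C *m x j + D *m u j).
Variables (t : nat) (al : 'cV[R]_(N - (L + l)).+1) (ub : nat -> 'cV[R]_m) (yb : nat -> 'cV[R]_p).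
Hypotheses (sol : feas_sol (ext_state l u y t) al ub yb) (u_applied : u (l + t)%N = ub l).

Lemma predicted_output : y (l + t)%N = yb l.
Proof.
have trb := feasible_sol_traj sol; have [_ _ xiE _ _] := sol.
have trc := shifted_traj t l.+1 x_step y_out.
rewrite (addnC l t) (ext_dyn_output GF_ext trc (k := l)) ?leqnn //=.
rewrite (ext_dyn_output GF_ext trb (k := l)) ?leqnn /=; last lia.
by rewrite subnn (addnC t l) u_applied xiE.
Qed.

Lemma shifted_candidate : Ct G F *m xs + D *m us = ys ->
  exists al' ub' yb', feas_sol (ext_state l u y t.+1) al' ub' yb' /\
    cost ub' yb' <= cost ub yb - stage (u (l + t)%N) (y (l + t)%N).
Proof.
move=> ysE; have TE : T.+1 = (L + l)%N by rewrite prednK // addn_gt0 L_gt0.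
have [xb [yb_out xb_step]] := feasible_sol_traj sol.
have [_ _ xiE XfL cstr] := sol.
set xiL := ext_state l ub yb L; set un := us + K *m (xiL - xs).
set xT := A *m xb T + B *m ub T; set yn := C *m xT + D *m un.
set ub' := shift_append T ub un; set yb' := shift_append T yb yn.
have traj' : is_traj A B C D (L + l) ub' yb'.
  exists (shift_append T xb xT); split => j jT; rewrite /ub' /yb' /shift_append.
    by case: ltnP => // jT'; rewrite yb_out //; lia.
  have -> : (j < T)%N by lia.
  by case: ltnP => [j1|j1]; [rewrite xb_step //; lia | have -> : j.+1 = T by lia].
have xi'E : ext_state l ub' yb' 0 = ext_state l u y t.+1.
  apply: eq_ext_state => i il; have iT : (i < T)%N by lia.
  rewrite add0n /ub' /yb' /shift_append iT.
  have [i1l|li1] := ltnP i.+1 l.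
    by case: (ext_state_inj xiE i1l); rewrite add0n addSnnS => -> ->.
  have -> : (t.+1 + i = l + t)%N by lia.
  have -> : i.+1 = l by lia.
  by rewrite u_applied predicted_output.
have shiftL : ext_state l ub' yb' L.-1 = xiL.
  apply: eq_ext_state => i il; have LiT : (L.-1 + i < T)%N by lia.
  by rewrite /ub' /yb' /shift_append LiT -addSn prednK.
have T_out : yb' T = Ct G F *m ext_state l ub' yb' L.-1 + D *m ub' T.
  rewrite (ext_dyn_output GF_ext traj' (k := T)); last by apply/andP; split; lia.
  by have -> : (T - l = L.-1)%N by lia.
have ub'T : ub' T = un by rewrite /ub' /shift_append ltnn.
have yb'T : yb' T = yn by rewrite /yb' /shift_append ltnn.
have yn_out : yn = Ct G F *m xiL + D *m un by rewrite -yb'T T_out shiftL ub'T.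
have termE : ext_state l ub' yb' L = At G F *m xiL + Bt l D *m un.
  have TE' : (L.-1 + l = T)%N by lia.
  have := @ext_state_step R l m p G F D ub' yb' L.-1.
  by rewrite TE' addn1 prednK // shiftL ub'T yb'T => ->.
have := terminal XfL; rewrite /= -/xiL -/un -yn_out => -[Xf' [U' Y'] dec].
have cstr' k : (k < L)%N -> U (ub' (l + k)%N) /\ Y (yb' (l + k)%N).
  move=> kL; rewrite /ub' /yb' /shift_append.
  have [lkT|_] := ltnP (l + k) T; last by [].
  by rewrite -addnS; apply: cstr; lia.
have [al' sol'] := traj_feasible_sol traj' xi'E (ltac:(by rewrite termE)) cstr'.
exists al', ub', yb'; split => //.
have unE : un - us = K *m (xiL - xs) by rewrite /un addrAC subrr add0r.
have stepE : At G F *m xiL + Bt l D *m un - xs = (At G F + Bt l D *m K) *m (xiL - xs).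
  by rewrite -{1}(ss_ext_fixed ysE) opprD addrACA -!mulmxBr unE mulmxDl mulmxA.
have := cost_shift_append ub yb un yn.
rewrite -/ub' -/yb' termE stepE u_applied predicted_output.
move: dec; rewrite qf_mulmx -unE.
lra.
Qed.

End ClosedLoopStep.

Lemma stage_lb : exists2 lam, 0 < lam & forall u y,
  lam * (sqnorm (u - us) + sqnorm (y - ys)) <= stage u y.
Proof.
have [lR lR_gt0 R_lb] := posdef_lb R_pd; have [lQ lQ_gt0 Q_lb] := posdef_lb Q_pd.
exists (Num.min lR lQ); first by rewrite lt_min lR_gt0.
move=> u y; rewrite mulrDr; apply: lerD.
  by apply: le_trans (R_lb _); rewrite ler_wpM2r ?sqnorm_ge0 // ge_min lexx.
by apply: le_trans (Q_lb _); rewrite ler_wpM2r ?sqnorm_ge0 // ge_min lexx orbT.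
Qed.

Lemma mpc_closed_loop (l_gt0 : (0 < l)%N) (Xf_xs : Xf xs) (cu : R) (cu_gt0 : 0 < cu)
  (value_ub : forall xi, feasible xi -> value xi <= cu * sqnorm (xi - xs)) :
  exists (c gamma : R), [/\ 0 < c, 0 < gamma, gamma < 1 &
    forall (u : nat -> 'cV[R]_m) (y : nat -> 'cV[R]_p) (x : nat -> 'cV[R]_n),
      (forall j, x j.+1 = A *m x j + B *m u j) ->
      (forall j, y j = C *m x j + D *m u j) ->
      (forall t, feasible (ext_state l u y t) ->
         exists al ub yb, opt_sol (ext_state l u y t) al ub yb /\ u (l + t)%N = ub l) ->
      feasible (ext_state l u y 0) ->
      [/\ forall t, feasible (ext_state l u y t),
          forall t, U (u (l + t)%N) /\ Y (y (l + t)%N) &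
          forall t, sqnorm (ext_state l u y t - xs)
                    <= c * gamma ^+ t * sqnorm (ext_state l u y 0 - xs)]].
Proof.
have [lam lam_gt0 stage_ge] := stage_lb.
have [gamma /andP[gamma_gt0 gamma_lt1] gamma_l] := @exists_root_ge R (cu / (cu + lam)) l
  (ltac:(by rewrite divr_gt0 ?addr_gt0 //= ltr_pdivrMr ?addr_gt0 // mul1r ltrDl)).
exists ((1 + cu / lam) / gamma ^+ (l + l)), gamma; split => //.
  by rewrite divr_gt0 ?exprn_gt0 // addr_gt0 // divr_gt0.
move=> u y x x_step y_out mpc feasible0.
have ysE := ss_output Xf_xs.
pose xi t := ext_state l u y t.
have step t : feasible (xi t) ->
    [/\ U (u (l + t)%N) /\ Y (y (l + t)%N), feasible (xi t.+1), 0 <= value (xi t) &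
        value (xi t.+1) <= value (xi t) - stage (u (l + t)%N) (y (l + t)%N)].
  move=> /mpc[al [ub [yb [opt u_applied]]]]; have [sol _] := opt.
  have [al' [ub' [yb' [sol' cost_le]]]] := shifted_candidate x_step y_out sol u_applied ysE.
  rewrite (ocp_value_opt opt) ocp_cost_ge0; split => //.
  - have [_ _ _ _ cstr] := sol.
    by have := cstr 0%N L_gt0; rewrite addn0 u_applied (predicted_output x_step y_out sol).
  - by exists al', ub', yb'.
  - exact: le_trans (ocp_value_le sol') cost_le.
have feasible_all t : feasible (xi t) by elim: t => // t /step[].
pose e j := sqnorm (u j - us) + sqnorm (y j - ys).
have windowE t : sqnorm (xi t - xs) = \sum_(i < l) e (t + i)%N.
  by rewrite /xi ext_state_subss sqnorm_ext_state.
split=> // [t|t]; first by case: (step t (feasible_all t)).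
rewrite !windowE.
apply: (windowed_lyapunov_decay (V := fun t => value (xi t))) => // [j|t'|t'|t'].
- by rewrite addr_ge0 ?sqnorm_ge0.
- by case: (step t' (feasible_all t')).
- have [_ _ _ V_le] := step t' (feasible_all t').
  by apply: le_trans V_le _; rewrite lerD2l lerN2; apply: stage_ge.
- by rewrite -windowE; apply: value_ub.
Qed.

End MPC.

Unset Implicit Arguments.

Theorem theorem2 (R : realType) (n m p : nat)
  (A : 'M[R]_n) (B : 'M[R]_(n, m)) (C : 'M[R]_(p, n)) (D : 'M[R]_(p, m))
  (Hctrb : controllable A B) (Hobsv : observable A C)
  (lg l : nat) (Hlag : is_lag A C lg) (Hl : (lg <= l)%N)
  (G : 'I_l -> 'M[R]_(p, m)) (F : 'I_l -> 'M[R]_(p, p)) (HGF : ext_dyn A B C D G F)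
  (N : nat) (ud : nat -> 'cV[R]_m) (yd : nat -> 'cV[R]_p) (Hdata : is_traj A B C D N ud yd)
  (U : set 'cV[R]_m) (Y : set 'cV[R]_p) (us : 'cV[R]_m) (ys : 'cV[R]_p)
  (Heq : is_equilibrium A B C D lg us ys)
  (Hint : in_interior [set v : 'cV[R]_(m + p) | U (usubmx v) /\ Y (dsubmx v)] (col_mx us ys))
  (Qw : 'M[R]_p) (Rw : 'M[R]_m) (HQ : posdef Qw) (HR : posdef Rw)
  (L : nat) (HL : (1 <= L)%N)
  (P : 'M[R]_(l * m + l * p)) (K : 'M[R]_(m, l * m + l * p)) (Xf : set 'cV[R]_(l * m + l * p))
  (HP : posdef P)
  (HXf : forall xi, Xf xi -> in_UlYl U Y xi)
  (HXfint : in_interior Xf (ext_ss l us ys))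
  (HA1 : forall xi, Xf xi ->
     let xs := ext_ss l us ys in
     let u := us + K *m (xi - xs) in
     let y := Ct G F *m xi + D *m u in
     [/\ Xf (At G F *m xi + Bt l D *m u),
         U u /\ Y y &
         qf P ((At G F + Bt l D *m K) *m (xi - xs))
           <= qf P (xi - xs) - qf (K^T *m Rw *m K) (xi - xs) - qf Qw (y - ys)])
  (cu : R) (Hcu : 0 < cu)
  (HA2 : forall xi, ocp_feasible L N ud yd U Y Xf xi ->
     ocp_value L N ud yd U Y us ys Qw Rw P Xf xi <= cu * sqnorm (xi - ext_ss l us ys))
  (HA3 : pers_exc N (L + l + n) ud) :
  exists (c gamma : R), [/\ 0 < c, 0 < gamma, gamma < 1 &
    forall (u : nat -> 'cV[R]_m) (y : nat -> 'cV[R]_p) (x : nat -> 'cV[R]_n),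
      (* closed-loop system; time t of the paper is index t + l here *)
      (forall j, x j.+1 = A *m x j + B *m u j) ->
      (forall j, y j = C *m x j + D *m u j) ->
      (* MPC law: u_t = bar u_0^*(t) for an optimal solution whenever the problem is feasible *)
      (forall t, ocp_feasible L N ud yd U Y Xf (ext_state l u y t) ->
         exists alpha ub yb,
           ocp_optimal_sol L N ud yd U Y us ys Qw Rw P Xf (ext_state l u y t) alpha ub yb
           /\ u (l + t)%N = ub l) ->
      (* initial feasibility *)
      ocp_feasible L N ud yd U Y Xf (ext_state l u y 0) ->
      [/\ forall t, ocp_feasible L N ud yd U Y Xf (ext_state l u y t),
          forall t, U (u (l + t)%N) /\ Y (y (l + t)%N) &
          forall t, sqnorm (ext_state l u y t - ext_ss l us ys)
                    <= c * gamma ^+ t * sqnorm (ext_state l u y 0 - ext_ss l us ys)]].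
Proof.
have l_gt0 : (0 < l)%N by case: Hlag => /andP[lg_gt0 _] _ _; exact: leq_trans lg_gt0 Hl.
have Xf_xs : Xf (ext_ss l us ys).
  by case: HXfint => e e_gt0; apply => i; rewrite subrr normr0.
exact: (mpc_closed_loop Hctrb HGF Hdata HQ HR HL HP HA3 HA1 l_gt0 Xf_xs Hcu HA2).
Qed.
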